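(* For every bipartite graph $G$, $\mathbf{tw}(G)\le 6\,\mathbf{mimw}(G')$, where $G'$ is defined below.
   Context: For $G=(V,E)$, $G'$ has vertices $x_v,y_v$ for each $v\in V$ and $p_{e,u},q_{e,u},p_{e,v},q_{e,v}$ for each edge $e=uv\in E$; its edges are $x_vy_u$ for all $u,v\in V$, and for each $e=uv\in E$ the edges $p_{e,u}q_{e,u}$, $p_{e,v}q_{e,v}$, $x_up_{e,u}$, $y_vq_{e,u}$, $x_vp_{e,v}$, $y_uq_{e,v}$. $\mathbf{tw}$ is treewidth. A branch decomposition $(T,\delta)$ of a graph $H$ is a tree with maximum degree $3$ and a bijection from its leaves to $V(H)$; each node of $T$ (rooted) yields a cut $(A,\bar A)$ with $A$ the labels of leaves below it. $\mathbf{mimw}(H)$ is the minimum over branch decompositions of the maximum over their cuts of the size of a maximum induced matching in $H[A,\bar A]$ (vertex set $V(H)$, edges of $H$ between $A$ and $\bar A$). *)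

From HB Require Import structures.
From mathcomp Require Import all_boot.
Set Implicit Arguments. Unset Strict Implicit. Unset Printing Implicit Defensive.

Definition simple_graph (T : finType) (e : rel T) : Prop :=
  symmetric e /\ irreflexive e.

Definition bipartite (T : finType) (e : rel T) : Prop :=
  exists c : T -> bool, forall x y, e x y -> c x != c y.

Definition is_tree (I : finType) (t : rel I) : Prop :=
  [/\ symmetric t, irreflexive t, 0 < #|I|,
      (forall a b, connect t a b) &
      (forall a b, t a b ->
         ~~ connect [rel x y | t x y && ((x, y) != (a, b)) && ((x, y) != (b, a))] a b)].

Definition tdeg (I : finType) (t : rel I) (i : I) : nat := #|[set j | t i j]|.
Definition is_leaf (I : finType) (t : rel I) (i : I) : bool := tdeg t i <= 1.

Definition tw_le (T : finType) (e : rel T) (k : nat) : Prop :=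
  exists (I : finType) (t : rel I) (bag : I -> {set T}),
    [/\ is_tree t,
        (forall v, exists i, v \in bag i),
        (forall u v, e u v -> exists i, (u \in bag i) && (v \in bag i)),
        (forall v i j, v \in bag i -> v \in bag j ->
           connect [rel a b | t a b && (v \in bag a) && (v \in bag b)] i j) &
        (forall i, #|bag i| <= k.+1)].

(* In the tree t rooted at r, node j lies below node i (j is in the subtree
   of i) iff i = r or every path from r to j passes through i. *)
Definition below (I : finType) (t : rel I) (r i j : I) : bool :=
  (i == r) || ~~ connect [rel a b | t a b && (a != i) && (b != i)] r j.

(* (t, lab) is a branch decomposition of a graph on V: t is a tree of maximum
   degree 3 and lab is a bijection from V onto the leaves of t
   (lab is the inverse of the paper's delta). *)
Definition is_branch_decomposition (V I : finType) (t : rel I) (lab : V -> I) : Prop :=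
  [/\ is_tree t,
      (forall i, tdeg t i <= 3),
      injective lab,
      (forall v, is_leaf t (lab v)) &
      (forall i, is_leaf t i -> exists v, lab v = i)].

Definition cut_side (V I : finType) (t : rel I) (r : I) (lab : V -> I) (i : I)
  : {set V} := [set v | below t r i (lab v)].

Definition induced_matching (V : finType) (h : rel V) (A : {set V})
  (M : {set V * V}) : Prop :=
  (forall p, p \in M -> [&& p.1 \in A, p.2 \notin A & h p.1 p.2]) /\
  (forall p q, p \in M -> q \in M -> p != q ->
     [&& p.1 != q.1, p.2 != q.2, ~~ h p.1 q.2 & ~~ h q.1 p.2]).

Definition mimw_le (V : finType) (h : rel V) (k : nat) : Prop :=
  exists (I : finType) (t : rel I) (r : I) (lab : V -> I),
    is_branch_decomposition t lab /\
    (forall i (M : {set V * V}),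
        induced_matching h (cut_side t r lab i) M -> #|M| <= k).

(* darts: ordered pairs (u, v) with uv an edge; the dart (u,v) indexes the
   pair p_{e,u}, q_{e,u} for e = uv. *)
Definition dart (T : finType) (e : rel T) := {d : T * T | e d.1 d.2}.

(* vertices: inl (inl v) = x_v, inl (inr v) = y_v,
             inr (inl d) = p_{e,u}, inr (inr d) = q_{e,u}  for d = (u,v). *)
Definition gp_vertex (T : finType) (e : rel T) : finType :=
  ((T + T) + (dart e + dart e))%type.

Definition gp_base (T : finType) (e : rel T) (a b : gp_vertex e) : bool :=
  match a, b with
  | inl (inl _), inl (inr _) => true                       (* x_v y_u *)
  | inr (inl d), inr (inr d') => d == d'                   (* p_{e,u} q_{e,u} *)
  | inl (inl u), inr (inl d) => u == (val d).1             (* x_u p_{e,u} *)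
  | inl (inr v), inr (inr d) => v == (val d).2             (* y_v q_{e,u} *)
  | _, _ => false
  end.

Definition gp_adj (T : finType) (e : rel T) : rel (gp_vertex e) :=
  fun a b => gp_base a b || gp_base b a.

From HB Require Import structures.
From mathcomp Require Import all_boot zify.
Set Implicit Arguments. Unset Strict Implicit. Unset Printing Implicit Defensive.

(* Fix a proper 2-colouring of G and a rooted branch decomposition of G' of
   mim-width k. Each vertex w of G has a trace in G' (x_w with the p, q of its
   edges, or y_w with the q of its edges, according to its colour); adjacent
   vertices share a q, so putting w into every node of the subtree spanned by
   the leaves of its trace gives a tree decomposition of G. If w is in the bag
   of an inner node j, its trace crosses the cut of j or of a child of j. The
   vertices whose trace crosses a fixed cut form, colour class by colour class,
   two induced matchings of that cut (edges x_w p or p q, resp. y_w q), hence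
   number at most 2k; with at most three cuts per node a bag has at most 6k
   vertices, and a leaf bag adds only the two traces through its vertex. *)

Definition avoid (I : finType) (e : rel I) (i : I) : rel I :=
  [rel x y | e x y && (x != i) && (y != i)].
Arguments avoid {I} e i _ _ /.

Lemma sub_connect (I : finType) (e e' : rel I) x y :
  subrel e e' -> connect e x y -> connect e' x y.
Proof. by move=> ee'; apply: connect_sub => {}x {}y /ee'; apply: connect1. Qed.

Section Avoid.
Variables (I : finType) (e : rel I).

Lemma avoid_sub i : subrel (avoid e i) e.
Proof. by move=> x y /andP[/andP[]]. Qed.

Lemma avoid_avoid_sub i j : subrel (avoid (avoid e i) j) (avoid e j).
Proof.
by move=> x y /andP[/andP[/andP[/andP[exy _] _] xj] yj]; rewrite /= exy xj yj.
Qed.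

Lemma avoid_sym i : symmetric e -> symmetric (avoid e i).
Proof. by move=> sym_e x y; rewrite /= sym_e andbAC. Qed.

Lemma connect_avoid_to i a : connect (avoid e i) a i -> a = i.
Proof.
case/connectP=> p; elim: p a => [|x p IHp] a /=; first by move=> _ ->.
by case/andP=> /andP[_ /negbTE xi] /IHp/[apply] ex; rewrite ex eqxx in xi.
Qed.

Lemma connect_avoid_nbr i a b : connect e a b -> ~~ connect (avoid e i) a b ->
  a != i -> exists2 n, e n i & connect (avoid e i) a n.
Proof.
case/connectP=> p; elim: p a => [|x p IHp] a /=; first by move=> _ -> /negP[].
case/andP=> eax path_p last_p a_b ai.
have [xi|xi] := eqVneq x i; first by exists a; rewrite -?xi.
have ax : avoid e i a x by rewrite /= eax ai xi.
have [|n ni xn] := IHp x path_p last_p _ xi.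
  by apply: contra a_b; apply: connect_trans (connect1 ax).
by exists n => //; apply: connect_trans (connect1 ax) xn.
Qed.

Lemma connect_avoid_unreachable x y i :
  connect e x y -> ~~ connect e x i -> connect (avoid e i) x y.
Proof.
move=> xy; apply: contraNT => nxy.
have [->|xi] := eqVneq x i; first exact: connect0.
have [n ni xn] := connect_avoid_nbr xy nxy xi.
exact: connect_trans (sub_connect (@avoid_sub i) xn) (connect1 ni).
Qed.

End Avoid.

Section Tree.
Variables (I : finType) (t : rel I).
Hypothesis tree_t : is_tree t.

Let sym_t : symmetric t. Proof. by case: tree_t. Qed.
Let irr_t : irreflexive t. Proof. by case: tree_t. Qed.

Lemma connect_avoid_sym i : connect_sym (avoid t i).
Proof. exact/sym_connect_sym/avoid_sym. Qed.

Lemma connect_avoid_from i a : connect (avoid t i) i a -> a = i.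
Proof. by rewrite connect_avoid_sym; apply: connect_avoid_to. Qed.

Lemma avoid_nbr a i : a != i -> exists2 n, t n i & connect (avoid t i) a n.
Proof.
move=> ai; have [_ _ _ conn_t _] := tree_t.
have nai : ~~ connect (avoid t i) a i.
  by apply: contraNN ai => /connect_avoid_to->.
exact: connect_avoid_nbr (conn_t a i) nai ai.
Qed.

Lemma bridge n i a :
  t n i -> connect (avoid t i) a n -> ~~ connect (avoid t n) a i.
Proof.
have [_ _ _ _ bridge_t] := tree_t.
move=> tni an; apply: contra (bridge_t n i tni) => ai.
set e' := [rel x y | _].
have [sub_n sub_i] : subrel (avoid t n) e' /\ subrel (avoid t i) e'.
  by split=> x y /andP[/andP[txy xm] ym];
    rewrite /e' /= txy !xpair_eqE (negbTE xm) (negbTE ym) ?andbF.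
apply: (@connect_trans _ _ a); last exact: sub_connect sub_n ai.
by apply: sub_connect sub_i _; rewrite connect_avoid_sym.
Qed.

Lemma below_refl r i : below t r i i.
Proof.
by rewrite /below; case: eqP => //= ir; apply/negP=> /connect_avoid_to/esym.
Qed.

(* Rooted at [a], [below t a i b] says that [i] lies on the path from [a] to
   [b]. *)
Lemma connect_below a b i : below t a i b ->
  connect [rel x y | t x y && below t a x b && below t a y b] a i.
Proof.
set comp := fun i => [set x | connect (avoid t i) a x].
move: {2}#|comp i| (leqnn #|comp i|) => m; elim: m i => [|m IHm] i.
  by rewrite leqn0 => /eqP/cards0_eq/setP/(_ a); rewrite !inE connect0.
move=> le_im bi; have [->|ia] := eqVneq i a; first exact: connect0.
rewrite /below (negbTE ia) /= in bi.
have [n tni an] : exists2 n, t n i & connect (avoid t i) a n.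
  by apply: avoid_nbr; rewrite eq_sym.
have sub_ni x : connect (avoid t n) a x -> connect (avoid t i) a x.
  move=> ax; apply: sub_connect (@avoid_avoid_sub _ t n i) _.
  exact: connect_avoid_unreachable ax (bridge tni an).
have bn : below t a n b by apply/orP; right; apply: contra bi; apply: sub_ni.
apply: (@connect_trans _ _ n).
  2: by apply: connect1; rewrite /= tni bn /below bi orbT.
have [->|na] := eqVneq n a; first exact: connect0.
apply: IHm bn; rewrite -ltnS; apply: leq_trans le_im; apply: proper_card.
apply/properP; split; first by apply/subsetP=> x; rewrite !inE; apply: sub_ni.
by exists n; rewrite !inE //; apply: contra na => /connect_avoid_to->.
Qed.

Lemma leaf_avoid_connect i a b :
  is_leaf t i -> a != i -> b != i -> connect (avoid t i) a b.
Proof.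
move=> /card_le1_eqP leaf_i ai bi.
have [n tni an] := avoid_nbr ai; have [n' tn'i bn'] := avoid_nbr bi.
have nn' : n = n' by apply: leaf_i; rewrite inE sym_t.
by apply: connect_trans an _; rewrite nn' connect_avoid_sym.
Qed.

Definition children r j := [set c | t j c && below t r j c].

Lemma card_children r j : (j != r) + #|children r j| <= tdeg t j.
Proof.
rewrite /tdeg; have [->|jr] := eqVneq j r.
  by apply: subset_leq_card; apply/subsetP=> x; rewrite !inE => /andP[].
have [p tpj rp] : exists2 p, t p j & connect (avoid t j) r p.
  by apply: avoid_nbr; rewrite eq_sym.
rewrite (cardsD1 p [set j0 | t j j0]) inE sym_t tpj add1n ltnS.
apply: subset_leq_card.
apply/subsetP=> x; rewrite !inE /below (negbTE jr) => /andP[-> nrx].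
by rewrite andbT; apply: contraNneq nrx => ->.
Qed.

Lemma below_split r j l s : l != j -> s != j -> ~~ connect (avoid t j) l s ->
  (below t r j l && ~~ below t r j s) \/
  exists2 c, c \in children r j & below t r c s && ~~ below t r c l.
Proof.
move=> lj sj ls; have [bs|] := boolP (below t r j s); last first.
  rewrite negb_or negbK => /andP[jr rs]; left.
  rewrite /below (negbTE jr) andbT /=.
  by apply: contra ls => rl; apply: connect_trans rs; rewrite connect_avoid_sym.
right; have [c tcj sc] := avoid_nbr sj.
have cj : c != j by apply: contraTneq tcj => ->; rewrite irr_t.
have to_j x : (x == j) || ~~ connect (avoid t j) x s -> connect (avoid t c) x j.
  have [-> _|xj /= xs] := eqVneq x j; first exact: connect0.
  have [n tnj xn] := avoid_nbr xj.
  have xc : ~~ connect (avoid t j) x c.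
    by apply: contra xs => xc; apply: connect_trans xc _; rewrite connect_avoid_sym.
  have nc : n != c by apply: contraNneq xc => <-.
  apply: (@connect_trans _ _ n); last by apply: connect1; rewrite /= tnj nc eq_sym cj.
  exact: sub_connect (@avoid_avoid_sub _ t j c) (connect_avoid_unreachable xn xc).
have r_j : connect (avoid t c) r j by apply: to_j; rewrite eq_sym.
have l_j : connect (avoid t c) l j by apply: to_j; rewrite ls orbT.
have cr : c != r.
  apply: contraTneq r_j => cr; rewrite cr; apply/negP=> /connect_avoid_from jr.
  by move: tcj; rewrite cr jr irr_t.
exists c.
  rewrite inE sym_t tcj /=; move: bs; rewrite /below.
  case: (j == r) => //= rs; apply: contra rs => rc.
  by apply: connect_trans rc _; rewrite connect_avoid_sym.
rewrite /below (negbTE cr) /= negbK; apply/andP; split.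
  apply: contra (bridge tcj sc) => rs; apply: connect_trans r_j.
  by rewrite connect_avoid_sym.
by apply: connect_trans r_j _; rewrite connect_avoid_sym.
Qed.

End Tree.

Section Matching.
Variables (V : finType) (h : rel V).

Definition cut_edge (A : {set V}) (p : V * V) :=
  [&& p.1 \in A, p.2 \notin A & h p.1 p.2].

Definition cut_mim_le (A : {set V}) k :=
  forall M : {set V * V}, induced_matching h A M -> #|M| <= k.

Lemma induced_matching1 (A : {set V}) a b :
  a \in A -> b \notin A -> h a b -> induced_matching h A [set (a, b)].
Proof.
move=> aA bA hab; split; first by move=> p /set1P->; rewrite /= aA bA hab.
by move=> p q /set1P-> /set1P->; rewrite eqxx.
Qed.

Lemma cut_mim_le_setC (A : {set V}) k :
  symmetric h -> cut_mim_le A k -> cut_mim_le (~: A) k.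
Proof.
move=> sym_h mimA M [crossM indM].
have swap_inj : injective (fun p : V * V => (p.2, p.1)) by move=> [? ?] [? ?] [-> ->].
rewrite -(card_imset _ swap_inj); apply: mimA; split.
  move=> _ /imsetP[p /crossM /and3P[p1 p2 hp] ->] /=.
  by rewrite -in_setC p1 -[_ \in A]negbK -in_setC p2 sym_h.
move=> _ _ /imsetP[p pM ->] /imsetP[q qM ->] pq /=.
have /and4P[-> -> hpq hqp] : [&& p.1 != q.1, p.2 != q.2, ~~ h p.1 q.2 & ~~ h q.1 p.2].
  by apply: indM => //; apply: contraNneq pq => ->.
by rewrite (sym_h p.2) (sym_h q.2) hpq hqp.
Qed.

(* Every element [w] of [S] has a crossing edge of shape [P w]; if edges of
   different shapes never meet, one edge per [w] is an induced matching. *)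
Lemma card_le_cut_mim W (S : {set W}) (P : W -> pred (V * V)) (A : {set V}) k :
  cut_mim_le A k ->
  (forall w, w \in S -> exists2 p, P w p & cut_edge A p) ->
  (forall w w' p p', P w p -> P w' p' -> h p.1 p'.2 -> w = w') ->
  #|S| <= k.
Proof.
move=> mimA cross_S shape.
have [->|[w0 w0S]] := set_0Vmem S; first by rewrite cards0.
have [p0 _ _] := cross_S w0 w0S.
pose f w := odflt p0 [pick p | P w p && cut_edge A p].
have fP w : w \in S -> P w (f w) && cut_edge A (f w).
  move=> /cross_S[p Pp cp]; rewrite /f; case: pickP => [//|/(_ p)].
  by rewrite /= Pp cp.
have fshape w w' : w \in S -> w' \in S -> h (f w).1 (f w').2 -> w = w'.
  by move=> /fP/andP[Pw _] /fP/andP[Pw' _]; apply: shape.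
have hf w : w \in S -> h (f w).1 (f w).2 by move=> /fP/and4P[].
have f_inj : {in S &, injective f}.
  by move=> w w' wS w'S fw; apply: (fshape _ _ wS w'S); rewrite fw hf.
rewrite -(card_in_imset f_inj); apply: mimA; split.
  by move=> _ /imsetP[w /fP/andP[_ cw] ->].
move=> _ _ /imsetP[w wS ->] /imsetP[w' w'S ->] fww'.
have ww' : w != w' by apply: contraNneq fww' => ->.
have nh a b : a \in S -> b \in S -> a != b -> ~~ h (f a).1 (f b).2.
  by move=> aS bS; apply: contra_neqN; apply: fshape.
have nh' : ~~ h (f w').1 (f w).2 by rewrite nh // eq_sym.
rewrite nh // nh' /= andbT; apply/andP; split.
  by apply: contraNneq ww' => f1; apply/eqP/(fshape _ _ wS w'S); rewrite f1 hf.
by apply: contraNneq ww' => f2; apply/eqP/(fshape _ _ wS w'S); rewrite -f2 hf.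
Qed.

End Matching.

Section BranchDecomposition.
Variables (V I : finType) (h : rel V) (t : rel I) (r : I) (lab : V -> I).
Hypothesis bd : is_branch_decomposition t lab.

Lemma cut_side_leaf z : lab z != r -> cut_side t r lab (lab z) = [set z].
Proof.
have [tree_t _ lab_inj leaf_lab _] := bd.
move=> zr; apply/setP=> v; rewrite !inE /below; move/negbTE: (zr) => -> /=.
have [->|vz] := eqVneq v z.
  by apply/negP=> /connect_avoid_to rz; rewrite rz eqxx in zr.
apply/negbTE; rewrite negbK; apply: leaf_avoid_connect; rewrite 1?eq_sym //.
by apply: contra vz => /eqP/lab_inj->.
Qed.

Lemma cut_mim_gt0 k a b : (forall i, cut_mim_le h (cut_side t r lab i) k) ->
  symmetric h -> a != b -> h a b -> 0 < k.
Proof.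
have [_ _ lab_inj _ _] := bd.
move=> mim sym_h.
wlog ar : a b / lab a != r.
  move=> gen ab hab; have [ar|ar] := eqVneq (lab a) r; last exact: gen hab.
  have br : lab b != r by apply: contraNneq ab => br; rewrite (lab_inj a b) // br ar.
  by apply: (gen b a) => //; rewrite 1?eq_sym // sym_h.
move=> ab hab; rewrite -(cards1 (a, b)); apply: (mim (lab a)).
by apply: induced_matching1 hab; rewrite cut_side_leaf // inE // eq_sym.
Qed.

End BranchDecomposition.

Lemma card_bigcup_le (I W : finType) (C : {set I}) (F : I -> {set W}) m :
  (forall i, i \in C -> #|F i| <= m) -> #|\bigcup_(i in C) F i| <= #|C| * m.
Proof.
move=> leF; rewrite -sum_nat_const.
apply: leq_trans (_ : _ <= \sum_(i in C) #|F i|) _; last exact: leq_sum.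
elim/big_ind2: _ => [|A1 n1 A2 n2 le1 le2|//]; first by rewrite cards0.
by apply: leq_trans (leq_card_setU _ _).1 (leq_add le1 le2).
Qed.

Lemma card_setU3_le (T : finType) (A B C : {set T}) :
  #|A :|: B :|: C| <= #|A| + #|B| + #|C|.
Proof.
apply: leq_trans (leq_card_setU _ _).1 _; rewrite leq_add2r.
exact: (leq_card_setU _ _).1.
Qed.

Section Encoding.
Variables (T : finType) (e : rel T) (c : T -> bool).
Local Notation V := (gp_vertex e).
Local Notation h := (@gp_adj T e).

Definition xv (u : T) : V := inl (inl u).
Definition yv (u : T) : V := inl (inr u).
Definition pv (d : dart e) : V := inr (inl d).
Definition qv (d : dart e) : V := inr (inr d).

Lemma gp_adj_sym : symmetric h.
Proof. by move=> a b; rewrite /gp_adj orbC. Qed.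

(* For a 2-colouring [c] of [e], the trace of [w] in G' is x_w with the
   p_{e,w}, q_{e,w} of its edges if [c w = false], and y_w with the q_{e,u}
   of its edges e = uw otherwise; [root w] is x_w resp. y_w. *)
Definition root (w : T) : V := if c w then yv w else xv w.

Definition in_trace (w : T) (z : V) : bool :=
  match z with
  | inl (inl u) => ~~ c w && (u == w)
  | inl (inr u) => c w && (u == w)
  | inr (inl d) => ~~ c w && ((val d).1 == w)
  | inr (inr d) => if c w then (val d).2 == w else (val d).1 == w
  end.

Lemma root_in_trace w : in_trace w (root w).
Proof. by rewrite /root /in_trace; case: (c w); rewrite /= eqxx. Qed.

Lemma card_trace_owners z : #|[set w | in_trace w z]| <= 2.
Proof.
suff [a [b sub]] : exists a b, [set w | in_trace w z] \subset [set a; b].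
  by apply: leq_trans (subset_leq_card sub) _; rewrite cards2; case: (_ != _).
case: z => [[u|u]|[d|d]]; [exists u, u | exists u, u | exists (val d).1, (val d).1
  | exists (val d).1, (val d).2]; apply/subsetP=> w; rewrite !inE /=.
all: by case: (c w) => //=; rewrite eq_sym => /eqP->; rewrite eqxx ?orbT.
Qed.

Definition crossing (N : {set V}) : {set T} :=
  [set w | (root w \in N) && [exists z, in_trace w z && (z \notin N)]].

Lemma card_crossing_coloured N k : cut_mim_le h N k ->
  #|crossing N :&: [set w | c w]| <= k.
Proof.
move=> mimN.
apply: (card_le_cut_mim (P := fun w p => [exists d : dart e,
  ((val d).2 == w) && (p == (yv w, qv d))]) mimN).
  move=> w; rewrite !inE /root => /andP[/andP[yw /existsP[z /andP[wz zN]]] cw].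
  rewrite cw in yw wz; case: z wz zN => [[u|u]|[d|d]] //=; rewrite cw //=.
    by move=> /eqP-> /negP.
  move=> dw qN; exists (yv w, qv d).
    by apply/existsP; exists d; rewrite dw eqxx.
  by rewrite /cut_edge /= yw qN /gp_adj /= eq_sym dw.
move=> w w' p p' /existsP[d /andP[_ /eqP->]] /existsP[d' /andP[dw' /eqP->]].
by rewrite /gp_adj /= orbF => /eqP->; apply/eqP.
Qed.

Lemma card_crossing_uncoloured N k : cut_mim_le h N k ->
  #|crossing N :\: [set w | c w]| <= k.
Proof.
move=> mimN.
apply: (card_le_cut_mim (P := fun w p => [exists d : dart e,
  ((val d).1 == w) && ((p == (xv w, pv d)) || (p == (pv d, qv d)))]) mimN).
  move=> w; rewrite !inE /root.
  move=> /andP[/negbTE cw /andP[xw /existsP[z /andP[wz zN]]]].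
  rewrite cw in xw wz; case: z wz zN => [[u|u]|[d|d]] //=; rewrite cw //=.
  - by move=> /eqP-> /negP.
  - move=> dw pN; exists (xv w, pv d).
      by apply/existsP; exists d; rewrite dw eqxx.
    by rewrite /cut_edge /= xw pN /gp_adj /= eq_sym dw.
  - move=> dw qN; have [pN|pN] := boolP (pv d \in N).
      exists (pv d, qv d); first by apply/existsP; exists d; rewrite dw eqxx orbT.
      by rewrite /cut_edge /= pN qN /gp_adj /= eqxx.
    exists (xv w, pv d); first by apply/existsP; exists d; rewrite dw eqxx.
    by rewrite /cut_edge /= xw pN /gp_adj /= eq_sym dw.
move=> w w' p p' /existsP[d /andP[/eqP dw pd]] /existsP[d' /andP[/eqP dw' pd']].
by case/orP: pd => /eqP->; case/orP: pd' => /eqP->;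
  rewrite /gp_adj /= ?orbF // => /eqP E; rewrite -dw' -?E ?dw.
Qed.

Lemma card_crossing N k : cut_mim_le h N k -> #|crossing N| <= k + k.
Proof.
move=> mimN; rewrite -(cardsID [set w | c w]).
by rewrite leq_add ?card_crossing_coloured ?card_crossing_uncoloured.
Qed.

Section Bags.
Variables (I : finType) (t : rel I) (r : I) (lab : V -> I) (k : nat).
Hypothesis bd : is_branch_decomposition t lab.
Hypothesis mim : forall i, cut_mim_le h (cut_side t r lab i) k.

Definition bag (j : I) : {set T} :=
  [set w | [exists z, in_trace w z && below t (lab (root w)) j (lab z)]].

Let tree_t : is_tree t. Proof. by case: bd. Qed.

Lemma bag_trace w z : in_trace w z -> w \in bag (lab z).
Proof. by move=> wz; rewrite inE; apply/existsP; exists z; rewrite wz below_refl. Qed.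

Lemma bag_edge u v : symmetric e -> (forall x y, e x y -> c x != c y) ->
  e u v -> exists i, (u \in bag i) && (v \in bag i).
Proof.
move=> sym_e colouring; wlog cu : u v / c u = false.
  move=> gen uv; case cu: (c u); last exact: gen.
  have cv : c v = false by move: (colouring u v uv); rewrite cu; case: (c v).
  have [i vu] := gen v u cv (etrans (sym_e v u) uv).
  by exists i; rewrite andbC.
move=> uv; have cv : c v by move: (colouring u v uv); rewrite cu; case: (c v).
exists (lab (qv (exist _ (u, v) uv))).
by rewrite !bag_trace //= ?cu ?cv.
Qed.

Lemma bag_connect v i j : v \in bag i -> v \in bag j ->
  connect [rel a b | t a b && (v \in bag a) && (v \in bag b)] i j.
Proof.
have up z x : in_trace v z -> below t (lab (root v)) x (lab z) ->
    connect [rel a b | t a b && (v \in bag a) && (v \in bag b)] (lab (root v)) x.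
  move=> vz /(connect_below tree_t); apply: sub_connect.
  move=> a b /andP[/andP[tab va] vb].
  by rewrite /= tab !inE; apply/andP; split; apply/existsP; exists z; rewrite vz.
have sym_bag : connect_sym [rel a b | t a b && (v \in bag a) && (v \in bag b)].
  apply: sym_connect_sym => a b /=; have [sym_t _ _ _ _] := tree_t.
  by rewrite sym_t andbAC.
rewrite !inE => /existsP[z1 /andP[vz1 i1]] /existsP[z2 /andP[vz2 j2]].
by apply: connect_trans (up _ _ vz2 j2); rewrite sym_bag; apply: up vz1 i1.
Qed.

Definition leaf_traces (j : I) : {set T} :=
  [set w | [exists z, in_trace w z && (lab z == j)]].

Lemma card_leaf_traces j : #|leaf_traces j| <= if is_leaf t j then 2 else 0.
Proof.
have [_ _ lab_inj leaf_lab _] := bd.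
case: (pickP [pred z | lab z == j]) => [z0 /eqP lz0 | none]; last first.
  suff -> : leaf_traces j = set0 by rewrite cards0.
  apply/setP=> w; rewrite !inE; apply/negbTE/existsPn=> z.
  by move: (none z) => /= ->; rewrite andbF.
rewrite -lz0 leaf_lab; apply: leq_trans (card_trace_owners z0).
apply/subset_leq_card/subsetP=> w; rewrite !inE => /existsP[z /andP[wz /eqP lz]].
by rewrite -(lab_inj z z0) // lz.
Qed.

Lemma bag_sub j : bag j \subset leaf_traces j :|: crossing (cut_side t r lab j)
  :|: \bigcup_(c0 in children t r j) crossing (~: cut_side t r lab c0).
Proof.
apply/subsetP=> w; rewrite inE => /existsP[z /andP[wz jz]].
have leaf_w z' : in_trace w z' -> lab z' == j -> w \in leaf_traces j.
  by move=> wz' lz'; rewrite inE; apply/existsP; exists z'; rewrite wz'.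
rewrite !in_setU; have [lj|lj] := eqVneq (lab (root w)) j.
  by rewrite (leaf_w _ (root_in_trace w)) ?lj.
have [zj|zj] := eqVneq (lab z) j; first by rewrite (leaf_w z) ?zj.
move: jz; rewrite /below eq_sym (negbTE lj) /= => sep.
case: (below_split tree_t r lj zj sep) => [/andP[bl bz]|[c0 c0j /andP[bz bl]]].
  apply/orP; left; apply/orP; right; rewrite inE !inE bl /=.
  by apply/existsP; exists z; rewrite wz inE bz.
apply/orP; right; apply/bigcupP; exists c0 => //.
by rewrite !inE bl /=; apply/existsP; exists z; rewrite wz !inE bz.
Qed.

Lemma card_cut_crossings j :
  #|crossing (cut_side t r lab j)| +
  #|\bigcup_(c0 in children t r j) crossing (~: cut_side t r lab c0)|
  <= tdeg t j * (k + k).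
Proof.
have parent : #|crossing (cut_side t r lab j)| <= (j != r) * (k + k).
  have [->|_] := eqVneq j r; last by rewrite mul1n card_crossing.
  rewrite leqn0 cards_eq0; apply/eqP/setP=> w; rewrite !inE.
  by apply/negbTE/nandP; right; apply/existsPn=> z; rewrite !inE /below eqxx andbF.
have kids : #|\bigcup_(c0 in children t r j) crossing (~: cut_side t r lab c0)|
    <= #|children t r j| * (k + k).
  apply: card_bigcup_le => c0 _; apply: card_crossing.
  exact: cut_mim_le_setC gp_adj_sym (@mim c0).
apply: leq_trans (leq_add parent kids) _.
by rewrite -mulnDl leq_mul2r card_children ?orbT.
Qed.

Lemma card_bag j : #|bag j| <= (6 * k).+1.
Proof.
have [T0|/card_gt0P[v _]] := posnP #|T|.
  by apply: leq_trans (max_card _) _; rewrite T0.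
have k_gt0 : 0 < k.
  exact: (cut_mim_gt0 bd (@mim) gp_adj_sym (a := xv v) (b := yv v)).
have := leq_trans (subset_leq_card (bag_sub j)) (card_setU3_le _ _ _).
have := card_leaf_traces j; have := card_cut_crossings j.
have [_ deg3 _ _ _] := bd; have := deg3 j; rewrite /is_leaf.
by case: (leqP (tdeg t j) 1); nia.
Qed.

End Bags.
End Encoding.

Theorem lemma12 (T : finType) (e : rel T) (k : nat) :
  simple_graph e -> bipartite e ->
  mimw_le (@gp_adj T e) k -> tw_le e (6 * k).
Proof.
move=> [sym_e _] [c colouring] [I [t [r [lab [bd mim]]]]].
exists I, t, (bag c t lab); split.
- by case: bd.
- by move=> v; exists (lab (root e c v)); apply/bag_trace/root_in_trace.
- by move=> u v; apply: bag_edge.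
- by move=> v i j; apply: bag_connect.
- exact: (card_bag c (r := r) bd mim).
Qed.
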